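(* Let $c$ be a non-constant clause on the variables $x_1,\dots,x_n$, and let $a\in[-1,1]^n$. If $\mathrm{FE}_c(a)=-1$, then $a$ is a feasible solution of $\mathrm{FE}_c$.
   Context: Boolean values are encoded as $\pm1$, with $-1$ standing for True. A clause is a CNF, cardinality, XOR or NAE constraint, regarded as a function $\{\pm1\}^n\to\{\pm1\}$ with value $-1$ exactly when it is satisfied. A clause is non-constant if it is equivalent neither to True nor to False. $\mathrm{FE}_c$ is the Fourier expansion of $c$, i.e. the unique multilinear polynomial agreeing with $c$ on $\{\pm1\}^n$. For a multilinear polynomial $F$ on $[-1,1]^n$, a set $J\subseteq[n]$ and a vector $z$, $F_{J\gets z}$ denotes the polynomial obtained by fixing the coordinates in $J$ to the values $z$. Feasibility: for $a\in[-1,1]^n$, let $I=\{i: a_i\in\{\pm1\}\}$ and let $a_I$ be the restriction of $a$ to the coordinates in $I$. Then $a$ is a feasible solution of $F$ if $F_{I\gets a_I}$ is a constant polynomial. *)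

From HB Require Import structures.
From mathcomp Require Import all_boot all_order all_algebra.
From mathcomp Require Import reals.
Set Implicit Arguments. Unset Strict Implicit. Unset Printing Implicit Defensive.
Import Order.TTheory GRing.Theory Num.Theory.
Local Open Scope ring_scope.

(** Boolean assignments: [b : {ffun 'I_n -> bool}], [b i = true] means x_i is True.
    In the +-1 encoding True is -1 and False is +1. *)
Definition pm1 {R : ringType} (t : bool) : R := if t then -1 else 1.

(** A literal is a variable index together with a flag [true] = negated. *)
Definition lit_val n (b : {ffun 'I_n -> bool}) (l : 'I_n * bool) : bool :=
  b l.1 (+) l.2.

Inductive clause_kind := CNF | CardGE of nat | CardLE of nat | XOR | NAE.

Record clause (n : nat) := Clause {
  ckind : clause_kind;
  clits : seq ('I_n * bool) }.

Definition sat n (c : clause n) (b : {ffun 'I_n -> bool}) : bool :=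
  let vs := [seq lit_val b l | l <- clits c] in
  match ckind c with
  | CNF => has id vs
  | CardGE k => k <= count id vs
  | CardLE k => count id vs <= k
  | XOR => odd (count id vs)
  | NAE => has id vs && has negb vs
  end%N.

Definition clause_fun {R : ringType} n (c : clause n) (b : {ffun 'I_n -> bool}) : R :=
  pm1 (sat c b).

Definition nonconstant n (c : clause n) : Prop :=
  (exists b, sat c b) /\ (exists b, ~~ sat c b).

(** Multilinear polynomials in n variables over R: coefficient of the monomial
    prod_{i in S} x_i for each S subset of [n]. *)
Definition mlpoly (R : Type) (n : nat) := {set 'I_n} -> R.

Definition mleval {R : ringType} n (F : mlpoly R n) (a : 'I_n -> R) : R :=
  \sum_(S : {set 'I_n}) F S * \prod_(i in S) a i.

Definition FE {R : fieldType} n (c : clause n) : mlpoly R n :=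
  fun S => (2%:R ^+ n)^-1 *
    \sum_(b : {ffun 'I_n -> bool}) clause_fun c b * \prod_(i in S) pm1 (b i).

(** F_{J <- z}: fix the variables in J to the values z; the result is a
    multilinear polynomial in the remaining variables (coefficients on monomials
    meeting J are 0). *)
Definition restrict {R : ringType} n (F : mlpoly R n) (J : {set 'I_n})
  (z : 'I_n -> R) : mlpoly R n :=
  fun T => if T \subset ~: J then
             \sum_(S : {set 'I_n} | S :\: J == T) F S * \prod_(i in S :&: J) z i
           else 0.

Definition constant_poly {R : ringType} n (F : mlpoly R n) : Prop :=
  forall T : {set 'I_n}, T != set0 -> F T = 0.

Definition feasible {R : ringType} n (F : mlpoly R n) (a : 'I_n -> R) : Prop :=
  let I := [set i | (a i == 1) || (a i == -1)] in
  constant_poly (restrict F I a).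

From HB Require Import structures.
From mathcomp Require Import all_boot all_order all_algebra.
From mathcomp Require Import reals lra.
(* FE_c(a) = 2^-n sum_x c(x) prod_i (1 + x_i a_i) is the mean of c under the
   product measure on {±1}^n with means a_i.  As c >= -1, the value -1 forces
   c(x) = -1 on the support of that measure, i.e. wherever the factors of the
   coordinates in I = {i | a_i = ±1} do not vanish (the other factors never do).
   Fixing the coordinates in I to a_I, the coefficient of prod_(i in T) x_i, for
   T disjoint from I, is 2^-n sum_x c(x) prod_(i in T) x_i prod_(i in I) (1 + x_i a_i).
   There c(x) may be replaced by -1, and the remaining sum factors over the
   coordinates, with a vanishing factor sum_(x_j = ±1) x_j for any j in T. *)

Set Implicit Arguments. Unset Strict Implicit. Unset Printing Implicit Defensive.
Import Order.TTheory GRing.Theory Num.Theory.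
Local Open Scope ring_scope.

Lemma sum_ffun_prod (R : comPzSemiRingType) (I : finType) (g : I -> bool -> R) :
  \sum_(b : {ffun I -> bool}) \prod_i g i (b i) = \prod_i (g i true + g i false).
Proof. by rewrite -bigA_distr_bigA; apply: eq_bigr => i _; rewrite big_bool. Qed.

Lemma sum_subset_prod (R : comPzSemiRingType) (I : finType) (A : {set I}) (f : I -> R) :
  \sum_(U : {set I} | U \subset A) \prod_(i in U) f i = \prod_(i in A) (1 + f i).
Proof.
transitivity (\prod_i ((if i \in A then f i else 0) + 1)); last first.
  by rewrite [RHS]big_mkcond; apply: eq_bigr => i _; case: ifP; rewrite ?add0r // addrC.
rewrite bigA_distr big_mkcond /=; apply: eq_bigr => U _.
case: (boolP (U \subset A)) => [UA | /subsetPn[i Ui /negbTE Ai]].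
  by rewrite big_mkcond; apply: eq_bigr => i _; case: ifP => // /(subsetP UA) ->.
by rewrite (bigD1 i) //= Ui Ai mul0r.
Qed.

Lemma sum_setD_eq_prod (R : comPzSemiRingType) (I : finType) (A T : {set I}) (f : I -> R) :
  [disjoint T & A] ->
  \sum_(S : {set I} | S :\: A == T) \prod_(i in S) f i
    = \prod_(i in T) f i * \prod_(i in A) (1 + f i).
Proof.
move=> TA; rewrite -sum_subset_prod big_distrr /=.
rewrite (reindex_onto (fun U => T :|: U) (fun S => S :&: A)) /=; last first.
  by move=> S /eqP <-; rewrite setUC setID.
apply: eq_big => [U | U /andP[_ /eqP UA]].
  rewrite setIUl (disjoint_setI0 TA) set0U setDUl (setDidPl TA).
  rewrite (sameP eqP setIidPl) andbC; case: (boolP (U \subset A)) => //= UA.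
  by move: UA; rewrite -setD_eq0 => /eqP ->; rewrite setU0 eqxx.
rewrite (eq_bigl [predU T & U]) => [|i]; last by rewrite !inE.
by rewrite bigU //; apply: disjointWr TA; rewrite -UA subsetIr.
Qed.

Lemma weighted_mean_eq_min (R : numDomainType) (I : finType) (w f : I -> R) (m : R) :
  (forall i, 0 <= w i) -> (forall i, m <= f i) ->
  \sum_i f i * w i = m * \sum_i w i ->
  forall i, w i != 0 -> f i = m.
Proof.
move=> w_ge0 f_ge_m mean_m i wi_neq0.
have excess_eq0 : \sum_i (f i - m) * w i = 0.
  by under eq_bigr do rewrite mulrBl; rewrite sumrB mean_m big_distrr subrr.
have excess_ge0 j : 0 <= (f j - m) * w j by rewrite mulr_ge0 ?subr_ge0.
have /(_ i isT)/eqP := psumr_eq0P (fun j _ => excess_ge0 j) excess_eq0.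
by rewrite mulf_eq0 (negbTE wi_neq0) orbF subr_eq0 => /eqP.
Qed.

Lemma pm1_eqN1 {R : numDomainType} (x : bool) : (pm1 x == -1 :> R) = x.
Proof. by case: x; rewrite /pm1 ?eqxx // eq_sym eqNr oner_eq0. Qed.

Lemma pm1_geN1 {R : numDomainType} (x : bool) : -1 <= pm1 x :> R.
Proof. by case: x; rewrite /pm1 // (le_trans (lerN10 R) ler01). Qed.

Lemma addr_pm1_mul_eq0 (R : nzRingType) (x : bool) (y : R) :
  (1 + pm1 x * y == 0) = (y == - pm1 x).
Proof. by case: x; rewrite /pm1 ?mulN1r ?mul1r addr_eq0 ?opprK eq_sym ?eqr_oppLR. Qed.

Lemma sum_parity_prod_eq0 (R : comNzRingType) n (I T : {set 'I_n}) (z : 'I_n -> R) j :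
  j \in T -> T \subset ~: I ->
  \sum_(b : {ffun 'I_n -> bool})
     \prod_(i in T) pm1 (b i) * \prod_(i in I) (1 + pm1 (b i) * z i) = 0.
Proof.
move=> Tj TI.
pose g i x := if i \in T then pm1 x else if i \in I then 1 + pm1 x * z i else 1.
transitivity (\sum_(b : {ffun 'I_n -> bool}) \prod_i g i (b i)).
  apply: eq_bigr => b _; rewrite [X in X * _]big_mkcond [X in _ * X]big_mkcond.
  rewrite -big_split /=; apply: eq_bigr => i _; rewrite /g.
  have [/(subsetP TI)|_] := boolP (i \in T); last by rewrite mul1r.
  by rewrite inE => /negbTE ->; rewrite mulr1.
by rewrite sum_ffun_prod (bigD1 j) //= /g Tj /pm1 addNr mul0r.
Qed.

Lemma mleval_restrict_setT (R : nzRingType) n (F : mlpoly R n) (z : 'I_n -> R) :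
  mleval F z = restrict F [set: 'I_n] z set0.
Proof.
rewrite /mleval /restrict sub0set; apply: eq_big => [S | S _]; first by rewrite setDT eqxx.
by rewrite setIT.
Qed.

Section FourierExpansion.
Variables (R : fieldType) (n : nat) (c : clause n).

Lemma restrict_FE (I T : {set 'I_n}) (z : 'I_n -> R) :
  T \subset ~: I ->
  restrict (FE c) I z T = (2%:R ^+ n)^-1 * \sum_b clause_fun c b *
    (\prod_(i in T) pm1 (b i) * \prod_(i in I) (1 + pm1 (b i) * z i)).
Proof.
move=> TI; rewrite /restrict TI /FE.
under eq_bigr => S _ do rewrite -mulrA big_distrl /=.
rewrite -big_distrr /= exchange_big /=; congr (_ * _); apply: eq_bigr => b _.
under eq_bigr => S _ do rewrite -mulrA.
rewrite -big_distrr /=; congr (_ * _).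
pose f i := pm1 (b i) * (if i \in I then z i else 1).
transitivity (\sum_(S : {set 'I_n} | S :\: I == T) \prod_(i in S) f i).
  apply: eq_bigr => S _; rewrite big_split /=; congr (_ * _).
  by rewrite -big_mkcondr; apply: eq_bigl => i; rewrite inE.
rewrite (sum_setD_eq_prod f) ?disjoints_subset //; congr (_ * _); apply: eq_bigr => i.
  by move=> /(subsetP TI); rewrite inE /f => /negbTE ->; rewrite mulr1.
by rewrite /f => ->.
Qed.

Definition weight (a : 'I_n -> R) (b : {ffun 'I_n -> bool}) : R :=
  \prod_i (1 + pm1 (b i) * a i).

Lemma mleval_FE (a : 'I_n -> R) :
  mleval (FE c) a = (2%:R ^+ n)^-1 * \sum_b clause_fun c b * weight a b.
Proof.
rewrite mleval_restrict_setT restrict_FE ?sub0set //; congr (_ * _).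
apply: eq_bigr => b _; rewrite big_set0 mul1r; congr (_ * _).
by apply: eq_bigl => i; rewrite inE.
Qed.

Lemma sum_weight (a : 'I_n -> R) : \sum_b weight a b = 2%:R ^+ n.
Proof.
rewrite /weight (sum_ffun_prod (fun i x => 1 + pm1 x * a i)) /pm1.
under eq_bigr do rewrite mulN1r mul1r addrCA subrK.
by rewrite prodr_const card_ord.
Qed.

End FourierExpansion.

Definition boolean_coords (R : nzRingType) n (a : 'I_n -> R) : {set 'I_n} :=
  [set i | (a i == 1) || (a i == -1)].

Section SatisfiedOnSupport.
Variables (R : realFieldType) (n : nat) (c : clause n) (a : 'I_n -> R).
Hypotheses (a_bound : forall i, -1 <= a i <= 1) (FE_eqN1 : mleval (FE c) a = -1).

Lemma sat_of_weight_neq0 b : weight a b != 0 -> sat c b.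
Proof.
have weight_ge0 b' : 0 <= weight a b'.
  apply: prodr_ge0 => i _; have /andP[aN1 a1] := a_bound i.
  by case: (b' i); rewrite /pm1; lra.
have mean_N1 : \sum_b clause_fun c b * weight a b = -1 * \sum_b weight a b.
  move: FE_eqN1; rewrite mleval_FE sum_weight.
  have two_pow_neq0 : 2%:R ^+ n != 0 :> R by rewrite expf_neq0 // pnatr_eq0.
  by move/(canRL (mulKf (invr_neq0 two_pow_neq0))); rewrite invrK mulN1r mulrN1.
move=> /(weighted_mean_eq_min weight_ge0 (fun b => pm1_geN1 (sat c b)) mean_N1).
by move/eqP; rewrite pm1_eqN1.
Qed.

Lemma sat_of_boolean_prod_neq0 (b : {ffun 'I_n -> bool}) :
  \prod_(i in boolean_coords a) (1 + pm1 (b i) * a i) != 0 -> sat c b.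
Proof.
move=> prod_neq0; apply: sat_of_weight_neq0.
rewrite /weight (bigID (mem (boolean_coords a))) /= mulf_neq0 //.
apply/prodf_neq0 => i; rewrite inE negb_or addr_pm1_mul_eq0 => /andP[a1 aN1].
by case: (b i); rewrite /pm1 ?opprK.
Qed.

Lemma clause_funM_boolean_prod (b : {ffun 'I_n -> bool}) (v : R) :
  let w := \prod_(i in boolean_coords a) (1 + pm1 (b i) * a i) in
  clause_fun c b * (v * w) = - (v * w).
Proof.
move=> w; have [->|w_neq0] := eqVneq w 0; first by rewrite mulr0 mulr0 oppr0.
by rewrite /clause_fun (sat_of_boolean_prod_neq0 w_neq0) mulN1r.
Qed.

End SatisfiedOnSupport.

Theorem lemma4 (R : realType) (n : nat) (c : clause n) (a : 'I_n -> R) :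
  nonconstant c ->
  (forall i, -1 <= a i <= 1) ->
  mleval (FE c) a = -1 ->
  feasible (FE c) a.
Proof.
move=> _ a_bound FE_eqN1.
change (constant_poly (restrict (FE c) (boolean_coords a) a)).
move=> T /set0Pn[j Tj].
have [TI|TnI] := boolP (T \subset ~: boolean_coords a); last by rewrite /restrict (negbTE TnI).
rewrite restrict_FE // (eq_bigr _ (fun b _ => clause_funM_boolean_prod a_bound FE_eqN1 b _)).
by rewrite sumrN (sum_parity_prod_eq0 _ Tj TI) oppr0 mulr0.
Qed.
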